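(* Let $(X,T)$ be a dynamical system. Then for every $\delta>0$ the family $\mathcal{S}_T(\delta)$ is $+$ invariant. Furthermore, the following are equivalent: (1) $(X,T)$ is transitively sensitive; (2) there exist $\delta>0$ and a dense $G_\delta$ subset $X_0\subset X$ such that $\omega_{\mathcal{S}_T(\delta)}(x)=X$ for each $x\in X_0$; (3) there exist $\delta>0$ and $x\in X$ with $\omega_{\mathcal{S}_T(\delta)}(x)=X$.
   Context: A dynamical system $(X,T)$: $X$ is a compact metric space (metric $d$) with more than one point and without isolated points, $T:X\to X$ a continuous surjection. ''Opene'' means open and nonempty. $S_T(U,\delta)=\{n\in\mathbb{Z}_+:\exists x_1,x_2\in U,\ d(T^nx_1,T^nx_2)>\delta\}$, $N_T(U,V)=\{n\in\mathbb{Z}_+:U\cap T^{-n}V\neq\varnothing\}$. $\mathcal{S}_T(\delta)$ is the family of all subsets of $\mathbb{Z}_+$ containing $S_T(U,\delta)$ for some opene $U$. For a family $\mathcal{F}$, $\omega_{\mathcal{F}}(x)=\bigcap_{F\in\mathcal{F}}\overline{\{T^ix:i\in F\}}$. A family $\mathcal{F}$ is $+$ invariant if for every $i\in\mathbb{Z}_+$, $F\in\mathcal{F}$ implies $\{i+j:j\in F\}\in\mathcal{F}$. $(X,T)$ is transitively sensitive if there is $\delta>0$ with $S_T(W,\delta)\cap N_T(U,V)\neq\varnothing$ for all opene $U,V,W\subset X$. *)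

From HB Require Import structures.
From mathcomp Require Import all_boot all_order all_algebra.
From mathcomp Require Import all_classical all_reals all_analysis.
From mathcomp Require Import borel_hierarchy.
Set Implicit Arguments. Unset Strict Implicit. Unset Printing Implicit Defensive.
Import Order.TTheory GRing.Theory Num.Theory.
Local Open Scope classical_set_scope.
Local Open Scope ring_scope.

Section Dyn.
Context {R : realType} {X : metricType R}.

Definition opene (U : set X) := open U /\ U !=set0.

Definition S_T (T : X -> X) (U : set X) (delta : R) : set nat :=
  [set n | exists x1 x2, U x1 /\ U x2 /\
     delta < mdist (iter n T x1) (iter n T x2)].

Definition N_T (T : X -> X) (U V : set X) : set nat :=
  [set n | U `&` (iter n T) @^-1` V !=set0].

Definition SF (T : X -> X) (delta : R) : set (set nat) :=
  [set F | exists U, opene U /\ S_T T U delta `<=` F].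

Definition omegaF (T : X -> X) (F : set (set nat)) (x : X) : set X :=
  \bigcap_(A in F) closure ((fun i => iter i T x) @` A).

Definition trans_sensitive (T : X -> X) :=
  exists2 delta : R, 0 < delta & forall U V W : set X,
    opene U -> opene V -> opene W -> S_T T W delta `&` N_T T U V !=set0.

End Dyn.

Definition plus_invariant (F : set (set nat)) :=
  forall (i : nat) (A : set nat), F A -> F [set (i + j)%N | j in A].

From HB Require Import structures.
From mathcomp Require Import all_boot all_order all_algebra.
From mathcomp Require Import all_classical all_reals all_analysis.
From mathcomp Require Import borel_hierarchy lra.
Import Order.TTheory GRing.Theory Num.Theory.
Local Open Scope classical_set_scope.
Local Open Scope ring_scope.

(* Pulling an opene U back by T^i (T is onto) and shrinking it so that its
   first i iterates stay uniformly small yields an opene U' with S_T(U',d)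
   inside i + S_T(U,d); this is + invariance.  The rest is about the open sets
   H(W,V) = S_T_visits W d V of points whose orbit enters V at a time of S_T(W,d):
   omega_{S_T(d)}(x) = X iff x lies in every H(W,V), and transitive
   sensitivity says that every H(W,V) is dense.  Baire's theorem in the
   compact space X, applied to the H(W,V) with W, V in a countable base, gives
   (1) => (2).  Conversely, if T^k x lies in U, the shift by k turns a time of
   S_T(W',d) at which x enters V into a time of S_T(W,d) /\ N_T(U,V). *)

Section compact_Baire.
Context {T : topologicalType}.

Lemma compact_nested_closure (D : (set T)^nat) : compact [set: T] ->
  (forall n, D n !=set0) -> (forall n, D n.+1 `<=` D n) ->
  exists p, forall n, closure (D n) p.
Proof.
move=> cpt D0 Dnext.
have Ddecr : {homo D : m n / (m <= n)%N >-> n `<=` m}.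
  apply: homo_leq => [A|A B C BA CB|]; first exact: subset_refl.
    exact: subset_trans CB BA.
  exact: Dnext.
pose G := filter_from [set: nat] D.
have GF : ProperFilter G.
  apply: filter_from_proper => [|n _]; last exact: D0.
  apply: filter_from_filter; first by exists 0%N.
  move=> m n _ _; exists (maxn m n) => // x Dx.
  by split; apply: (Ddecr _ (maxn m n)) => //; rewrite ?leq_maxl ?leq_maxr.
have [p [_ clp]] := cpt G GF filterT.
by exists p => n B /clp; apply; exists n.
Qed.

Hypothesis regT : regular_space T.

Lemma regular_closure_shrink (A : set T) (a : T) :
  open A -> A a -> exists2 B, open B /\ B a & closure B `<=` A.
Proof.
move=> oA Aa.
have [N Na NA] : filter_from (nbhs a) closure A.
  exact: regT (open_nbhs_nbhs (conj oA Aa)).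
exists (N°).
  by split; [exact: open_interior | exact: nbhs_singleton (nbhs_interior Na)].
by apply: subset_trans NA; apply: closureS; exact: interior_subset.
Qed.

Lemma compact_regular_Baire (S : set T) : compact [set: T] ->
  Gdelta_dense S -> dense S.
Proof.
move=> cpt [F oF ->] D D0 oD.
pose O := {A : set T | open A /\ A !=set0}.
have shrink (kA : nat * O) :
    exists B : O, closure (sval B) `<=` sval kA.2 `&` F kA.1.
  case: kA => k [A [oA A0]] /=.
  have [a [Aa Fa]] := (oF k).2 A A0 oA.
  have [B [oB Ba] BAF] :=
    regular_closure_shrink _ _ (openI oA (oF k).1) (conj Aa Fa).
  by exists (exist _ B (conj oB (ex_intro _ a Ba))).
have [g gP] := choice shrink.
pose fix Dn n : O := if n is m.+1 then g (m, Dn m) else exist _ D (conj oD D0).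
have Dnext n : closure (sval (Dn n.+1)) `<=` sval (Dn n) `&` F n := gP (n, Dn n).
have [p clp] := compact_nested_closure (fun n => sval (Dn n)) cpt
  (fun n => (svalP (Dn n)).2) (fun n x Dx => (Dnext n x (subset_closure Dx)).1).
exists p; split; first exact: (Dnext 0%N p (clp 1%N)).1.
by move=> n _; exact: (Dnext n p (clp n.+1)).2.
Qed.

End compact_Baire.

Lemma Gdelta_dense_bigcap_countable {T : topologicalType} {I : Type}
    {D : set I} {F : I -> set T} :
  countable D -> (forall i, D i -> open (F i) /\ dense (F i)) ->
  Gdelta_dense (\bigcap_(i in D) F i).
Proof.
move=> /pfcard_geP[->|[f]] odF.
  exists (fun=> setT); last by rewrite bigcap_set0 bigcap_const.
  by move=> _; split; [exact: openT | by move=> O O0 _; rewrite setIT].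
have Dimg : D = [eta f] @` setT by rewrite image_eq.
exists (F \o f); first by move=> n; apply: odF; exact: funS.
by rewrite [in LHS]Dimg bigcap_image.
Qed.

(* [compact_second_countable] wants a pointed space. *)
Definition pointed_at {R : realType} {X : pseudoMetricType R} (x0 : X) : Type := X.
HB.instance Definition _ (R : realType) (X : pseudoMetricType R) (x0 : X) :=
  PseudoMetric.on (pointed_at x0).
HB.instance Definition _ (R : realType) (X : pseudoMetricType R) (x0 : X) :=
  isPointed.Build (pointed_at x0) x0.

Lemma compact_pseudoMetric_second_countable {R : realType}
    (X : pseudoMetricType R) :
  compact [set: X] -> @second_countable X.
Proof.
have [[x0 _] cpt|X0 _] := pselect ([set: X] !=set0).
  exact: (@compact_second_countable R (pointed_at x0)).
exists set0 => //; split => // x; exfalso; exact: X0 (ex_intro _ x I).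
Qed.

Section sensitivity_sets.
Context {R : realType} {X : metricType R} {T : X -> X}.
Hypothesis contT : continuous T.

Lemma continuous_iter n : continuous (iter n T).
Proof.
elim: n => [|n IH] x /=; first exact: cvg_id.
exact: continuous_comp (IH x) (contT _).
Qed.

Lemma S_TS U V d : U `<=` V -> S_T T U d `<=` S_T T V d.
Proof.
move=> UV n [x1 [x2 [U1 [U2 d12]]]].
by exists x1, x2; split; [exact: UV | split; [exact: UV |]].
Qed.

Lemma near_iter_ball (x0 : X) e m : 0 < e ->
  nbhs x0 [set y | forall k, (k < m)%N -> ball (iter k T x0) e (iter k T y)].
Proof.
move=> e0; elim: m => [|m IH]; first exact: nearW.
have near_m : nbhs x0 (iter m T @^-1` ball (iter m T x0) e).
  exact: continuous_iter (nbhsx_ballx _ _ e0).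
apply: filterS (filterI IH near_m) => y [lt_m eq_m] k.
by rewrite ltnS leq_eqVlt => /orP[/eqP -> //|/lt_m].
Qed.

Definition S_T_visits (W : set X) (d : R) (V : set X) : set X :=
  \bigcup_(n in S_T T W d) iter n T @^-1` V.

Lemma open_S_T_visits W d V : open V -> open (S_T_visits W d V).
Proof.
move=> oV; apply: bigcup_open => n _.
by apply: open_comp => // x _; exact: continuous_iter.
Qed.

Lemma S_T_visitsS {W W' : set X} d {V V' : set X} : W `<=` W' -> V `<=` V' ->
  S_T_visits W d V `<=` S_T_visits W' d V'.
Proof. by move=> WW' VV' x [n Sn Vn]; exists n; [exact: S_TS Sn | exact: VV']. Qed.

Lemma dense_S_T_visits W d V : dense (S_T_visits W d V) <->
  forall U, opene U -> S_T T W d `&` N_T T U V !=set0.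
Proof.
split=> [dense_visits U [oU U0]|meet U U0 oU].
  have [x [Ux [n Sn Vn]]] := dense_visits U U0 oU.
  by exists n; split => //; exists x.
have [n [Sn [x [Ux Vn]]]] := meet U (conj oU U0).
by exists x; split => //; exists n.
Qed.

Lemma omegaF_SF_setT d x : omegaF T (SF T d) x = [set: X] <->
  forall W V, opene W -> opene V -> S_T_visits W d V x.
Proof.
split=> [omega_full W V oW [oV [v Vv]]|visits].
  have SW : SF T d (S_T T W d) by exists W; split.
  have : omegaF T (SF T d) x v by rewrite omega_full.
  move=> /(_ _ SW V (open_nbhs_nbhs (conj oV Vv))) [_ [[n Sn <-] Vn]].
  by exists n.
apply/seteqP; split => // y _ A [W [oW SA]] N Ny.
have oN : opene (N°).
  split; first exact: open_interior.
  by exists y; exact: nbhs_singleton (nbhs_interior Ny).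
have [n Sn Vn] := visits W (N°) oW oN.
by exists (iter n T x); split; [exists n => //; exact: SA | exact: interior_subset].
Qed.

Lemma S_T_visits_basis B d x : basis B ->
  (forall W V, B W -> W !=set0 -> B V -> V !=set0 -> S_T_visits W d V x) ->
  forall W V, opene W -> opene V -> S_T_visits W d V x.
Proof.
move=> [_ Bnbhs] visits W V [oW [w Ww]] [oV [v Vv]].
have [W' [BW' W'w] W'W] := Bnbhs w W (open_nbhs_nbhs (conj oW Ww)).
have [V' [BV' V'v] V'V] := Bnbhs v V (open_nbhs_nbhs (conj oV Vv)).
apply: (S_T_visitsS d W'W V'V); apply: visits => //; [exists w | exists v] => //.
Qed.

Lemma trans_sensitive_Gdelta_omegaF : compact [set: X] -> trans_sensitive T ->
  exists2 d : R, 0 < d & exists X0 : set X,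
    [/\ Gdelta X0, dense X0 & forall x, X0 x -> omegaF T (SF T d) x = [set: X]].
Proof.
move=> cpt [d d0 ts]; exists d => //.
have [B cB Bbasis] := compact_pseudoMetric_second_countable _ cpt.
pose P := [set p : set X * set X | [/\ B p.1, p.1 !=set0, B p.2 & p.2 !=set0]].
have cP : countable P.
  by apply: sub_countable (countableX cB cB); apply: subset_card_le => p [].
have visits_open_dense p : P p ->
    open (S_T_visits p.1 d p.2) /\ dense (S_T_visits p.1 d p.2).
  case: p => W V [/= BW W0 BV V0]; split; first exact/open_S_T_visits/Bbasis.1.
  by apply/dense_S_T_visits => U oU; apply: ts => //; split => //; exact: Bbasis.1.
have GdP := Gdelta_dense_bigcap_countable cP visits_open_dense.
exists (\bigcap_(p in P) S_T_visits p.1 d p.2); split.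
- by case: GdP => F oF ->; exists F => // n; have [] := oF n.
- exact: compact_regular_Baire uniform_regular _ cpt GdP.
- move=> x X0x; apply/omegaF_SF_setT; apply: S_T_visits_basis Bbasis _.
  by move=> W V BW W0 BV V0; exact: (X0x (W, V)).
Qed.

Hypothesis surjT : forall y, exists x, T x = y.

Lemma iter_surj n y : exists x, iter n T x = y.
Proof.
elim: n y => [|n IH] y; first by exists y.
by have [z <-] := surjT y; have [x <-] := IH z; exists x.
Qed.

Lemma S_T_shift i {d : R} {U : set X} : 0 < d -> opene U ->
  exists2 U', opene U' & S_T T U' d `<=` [set (i + j)%N | j in S_T T U d].
Proof.
move=> d0 [oU [u Uu]].
have [x0 x0u] := iter_surj i u.
(* near x0 no pair of points is d-separated before time i *)
have d2 : 0 < d / 2 by rewrite divr_gt0.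
have := near_iter_ball x0 (d / 2) i d2; rewrite nbhsE => -[B [oB Bx0] Bball].
exists (B `&` iter i T @^-1` U).
  split; last by exists x0; split => //=; rewrite x0u.
  by apply: openI => //; apply: open_comp => // x _; exact: continuous_iter.
move=> n [x1 [x2 [[B1 U1] [[B2 U2] d12]]]].
have [le_in|lt_ni] := leqP i n.
  exists (n - i)%N; last exact: subnKC.
  by exists (iter i T x1), (iter i T x2); rewrite -!iterD subnK.
have := Bball _ B1 _ lt_ni; have := Bball _ B2 _ lt_ni.
rewrite !ballEmdist /= => ball2 ball1.
have := metric_triangle (iter n T x1) (iter n T x0) (iter n T x2).
rewrite metric_sym in ball1; lra.
Qed.

Lemma SF_plus_invariant d : 0 < d -> plus_invariant (SF T d).
Proof.
move=> d0 i A [U [oU SA]].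
have [U' oU' SU'] := S_T_shift i d0 oU.
by exists U'; split => //; apply: subset_trans SU' _; exact: image_subset.
Qed.

Lemma omegaF_setT_trans_sensitive :
  (exists2 d : R, 0 < d & exists x, omegaF T (SF T d) x = [set: X]) ->
  trans_sensitive T.
Proof.
move=> [d d0 [x /omegaF_SF_setT visits]]; exists d => // U V W oU oV oW.
have [k _ Uk] := visits W U oW oU.
have [W' oW' SW'] := S_T_shift k d0 oW.
have [_ /SW'[j Sj <-] Vkj] := visits W' V oW' oV.
by exists j; split => //; exists (iter k T x); split => //; rewrite /= -iterD addnC.
Qed.

End sensitivity_sets.

Theorem proposition4p3 (R : realType) (X : metricType R) (T : X -> X)
  (hcpt : compact [set: X])
  (hnontriv : exists x y : X, x <> y)
  (hnoiso : forall x : X, ~ isolated [set: X] x)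
  (hcont : continuous T)
  (hsurj : forall y : X, exists x : X, T x = y) :
  (forall delta : R, 0 < delta -> plus_invariant (SF T delta)) /\
  ((trans_sensitive T <->
     exists2 delta : R, 0 < delta & exists X0 : set X,
       [/\ Gdelta X0, dense X0 & forall x, X0 x -> omegaF T (SF T delta) x = [set: X]]) /\
   ((exists2 delta : R, 0 < delta & exists X0 : set X,
       [/\ Gdelta X0, dense X0 & forall x, X0 x -> omegaF T (SF T delta) x = [set: X]]) <->
    exists2 delta : R, 0 < delta & exists x : X, omegaF T (SF T delta) x = [set: X])).
Proof.
have [x0 _] := hnontriv.
have dense_point (X0 : set X) : dense X0 -> exists x, X0 x.
  by move=> /(_ setT (ex_intro _ x0 I) openT) [x [_ X0x]]; exists x.
have ts_Gdelta := trans_sensitive_Gdelta_omegaF hcont hcpt.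
have point_ts := omegaF_setT_trans_sensitive hcont hsurj.
split; first exact: SF_plus_invariant.
split; split.
- exact: ts_Gdelta.
- move=> [d d0 [X0 [_ /dense_point[x X0x] omegaX0]]].
  by apply: point_ts; exists d => //; exists x; exact: omegaX0.
- move=> [d d0 [X0 [_ /dense_point[x X0x] omegaX0]]].
  by exists d => //; exists x; exact: omegaX0.
- by move=> /point_ts; exact: ts_Gdelta.
Qed.
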